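(* Let $\gamma,A\in\mathcal{M}_k\otimes\mathcal{M}_m$ be states with $\mathrm{Im}(\gamma)=\mathrm{Im}(A)$. Suppose there is an orthogonal projection $V_1\in\mathcal{M}_k$ such that (1) $F_\gamma\circ G_\gamma(V_1\mathcal{M}_kV_1)\subseteq V_1\mathcal{M}_kV_1$, (2) $F_\gamma\circ G_\gamma|_{V_1\mathcal{M}_kV_1}$ is irreducible, and (3) $F_\gamma\circ G_\gamma|_{V_1^\perp\mathcal{M}_k+\mathcal{M}_kV_1^\perp}\equiv0$. Then the same three conditions hold with $F_A\circ G_A$ in place of $F_\gamma\circ G_\gamma$. In particular, $\gamma$ and $A$ both belong to $CR_{k,m}$.
   Context: $\mathcal{M}_k$ denotes the complex $k\times k$ matrices, and $\mathcal{M}_k\otimes\mathcal{M}_m$ is identified with $\mathcal{M}_{km}$ via the Kronecker product. A state is a positive semidefinite Hermitian matrix (not necessarily of trace one). For an orthogonal projection $W$, $W^\perp=\mathrm{Id}-W$; $V\mathcal{M}_kW=\{VXW:X\in\mathcal{M}_k\}$, $W\mathcal{M}_k=\{WX\}$, $\mathcal{M}_kW=\{XW\}$. For $\gamma=\sum_{i=1}^nA_i\otimes B_i\in\mathcal{M}_k\otimes\mathcal{M}_m$ define $G_\gamma:\mathcal{M}_k\to\mathcal{M}_m$, $G_\gamma(X)=\sum_i\mathrm{tr}(A_iX)B_i$, and $F_\gamma:\mathcal{M}_m\to\mathcal{M}_k$, $F_\gamma(Y)=\sum_i\mathrm{tr}(B_iY)A_i$. A linear map is positive if it maps positive semidefinite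 matrices to positive semidefinite matrices, and self-adjoint if self-adjoint with respect to $\langle X,Y\rangle=\mathrm{tr}(XY^* )$. Given an orthogonal projection $V\in\mathcal{M}_k$ and a positive map $T:V\mathcal{M}_kV\to V\mathcal{M}_kV$, $T$ is irreducible if the only orthogonal projections $W$ with $W\mathcal{M}_kW\subseteq V\mathcal{M}_kV$ and $T(W\mathcal{M}_kW)\subseteq W\mathcal{M}_kW$ are $W=0$ and $W=V$. A self-adjoint positive map $T:\mathcal{M}_k\to\mathcal{M}_k$ is completely reducible if there are orthogonal projections $W_1,\dots,W_l$ with $W_iW_j=0$ for $i\ne j$, $T(W_i\mathcal{M}_kW_i)\subseteq W_i\mathcal{M}_kW_i$ and $T|_{W_i\mathcal{M}_kW_i}$ irreducible for every $i$, and $T|_R\equiv0$, where $R$ is the orthogonal complement (trace inner product) of $\bigoplus_iW_i\mathcal{M}_kW_i$ in $\mathcal{M}_k$. $CR_{k,m}$ is the set of states $\gamma\in\mathcal{M}_k\otimes\mathcal{M}_m$ such that $F_\gamma\circ G_\gamma:\mathcal{M}_k\to\mathcal{M}_k$ is completely reducible. *)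

(* Complex numbers are modelled by an arbitrary
   numClosedFieldType C (algebraically closed field with conjugation and the
   partial order 0 <= z <-> z real and nonnegative); the complex field is an
   instance. *)
From HB Require Import structures.
From mathcomp Require Import all_boot all_order all_algebra.
From mathcomp Require Import mxtens.
Set Implicit Arguments. Unset Strict Implicit. Unset Printing Implicit Defensive.
Import Order.TTheory GRing.Theory Num.Theory.
Local Open Scope ring_scope.

Section Defs.
Variable C : numClosedFieldType.

Definition adjmx {p q : nat} (A : 'M[C]_(p, q)) : 'M[C]_(q, p) :=
  map_mx Num.conj A^T.

Definition psd {n : nat} (A : 'M[C]_n) : Prop :=
  adjmx A = A /\ forall v : 'cV[C]_n, 0 <= (adjmx v *m A *m v) 0 0.

Definition orthoproj {n : nat} (W : 'M[C]_n) : Prop :=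
  W *m W = W /\ adjmx W = W.

Definition perpmx {n : nat} (W : 'M[C]_n) : 'M[C]_n := 1%:M - W.

Definition trdot {n : nat} (X Y : 'M[C]_n) : C := \tr (X *m adjmx Y).

Definition inVMW {n : nat} (V W Y : 'M[C]_n) : Prop :=
  exists X : 'M[C]_n, Y = V *m X *m W.

(* Block (i,j) of gamma in M_k (x) M_m (Kronecker convention of mxtens):
   gamma = \sum_(i,j) delta_mx i j *t blk gamma i j. *)
Definition blk {k m : nat} (g : 'M[C]_(k * m)) (i j : 'I_k) : 'M[C]_m :=
  \matrix_(a, b) g (mxtens_index (i, a)) (mxtens_index (j, b)).

(* G_gamma(X) = \sum_i tr(A_i X) B_i, F_gamma(Y) = \sum_i tr(B_i Y) A_i,
   computed on the decomposition gamma = \sum_(i,j) E_ij (x) blk gamma i j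
   (the value does not depend on the chosen decomposition). *)
Definition Gmap {k m : nat} (g : 'M[C]_(k * m)) (X : 'M[C]_k) : 'M[C]_m :=
  \sum_(i < k) \sum_(j < k) \tr (delta_mx i j *m X) *: blk g i j.

Definition Fmap {k m : nat} (g : 'M[C]_(k * m)) (Y : 'M[C]_m) : 'M[C]_k :=
  \sum_(i < k) \sum_(j < k) \tr (blk g i j *m Y) *: delta_mx i j.

Definition FG {k m : nat} (g : 'M[C]_(k * m)) (X : 'M[C]_k) : 'M[C]_k :=
  Fmap g (Gmap g X).

Definition positive_map {n p : nat} (T : 'M[C]_n -> 'M[C]_p) : Prop :=
  forall X, psd X -> psd (T X).

Definition selfadjoint_map {n : nat} (T : 'M[C]_n -> 'M[C]_n) : Prop :=
  forall X Y, trdot (T X) Y = trdot X (T Y).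

Definition mx_invariant {n : nat} (T : 'M[C]_n -> 'M[C]_n) (W : 'M[C]_n) : Prop :=
  forall Y, inVMW W W Y -> inVMW W W (T Y).

Definition irreducible_on {n : nat} (T : 'M[C]_n -> 'M[C]_n) (V : 'M[C]_n)
  : Prop :=
  forall W : 'M[C]_n, orthoproj W ->
    (forall Y, inVMW W W Y -> inVMW V V Y) ->
    mx_invariant T W ->
    W = 0 \/ W = V.

Definition completely_reducible {n : nat} (T : 'M[C]_n -> 'M[C]_n) : Prop :=
  selfadjoint_map T /\ positive_map T /\
  exists (l : nat) (W : 'I_l -> 'M[C]_n),
    [/\ forall i, orthoproj (W i),
        forall i j, i != j -> W i *m W j = 0,
        forall i, mx_invariant T (W i),
        forall i, irreducible_on T (W i) &
        forall Y, (forall i X, trdot Y (W i *m X *m W i) = 0) -> T Y = 0].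

Definition CR (k m : nat) (g : 'M[C]_(k * m)) : Prop :=
  psd g /\ completely_reducible (FG g).

End Defs.

(* The three conditions on [F_g \o G_g] are each equivalent to the vanishing
   of the sandwiches [g (P ⊗ Id) g] for [P] in a corner [U M_k V] of [M_k]:
   invariance of [W M_k W] corresponds to the corner [W M_k W^perp], and
   vanishing on [V^perp M_k + M_k V^perp] to the corner [V^perp M_k V^perp].
   The bridge is a realignment identity expressing [tr (g (P ⊗ Id) g (Q ⊗ Id))]
   through the traces [tr (G_g X G_g Y)], together with the positivity of [g],
   which turns [tr (g M g M^* ) = 0] into [g M g = 0].  Whether [g M g]
   vanishes depends only on the image of [g]: if [Im A <= Im g] then
   [A = g D = D^* g], so [A M A = D^* (g M g) D].  Hence the three conditions
   pass from [gamma] to [A]; complete reducibility, with [V_1] as the single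
   block, then only needs [F \o G] to be positive and self-adjoint. *)

From HB Require Import structures.
From mathcomp Require Import all_boot all_order all_algebra.
From mathcomp Require Import mxtens spectral ring.
Set Implicit Arguments. Unset Strict Implicit. Unset Printing Implicit Defensive.
Import Order.TTheory GRing.Theory Num.Theory.
Local Open Scope ring_scope.

Section ComplexMatrices.
Variable C : numClosedFieldType.

Lemma adjmxE p q (M : 'M[C]_(p, q)) i j : adjmx M i j = (M j i)^*.
Proof. by rewrite !mxE. Qed.

Lemma adjmx0 p q : adjmx (0 : 'M[C]_(p, q)) = 0.
Proof. by apply/matrixP=> i j; rewrite !mxE rmorph0. Qed.

Lemma adjmxD p q (M N : 'M[C]_(p, q)) : adjmx (M + N) = adjmx M + adjmx N.
Proof. by apply/matrixP=> i j; rewrite !mxE rmorphD. Qed.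

Lemma adjmxN p q (M : 'M[C]_(p, q)) : adjmx (- M) = - adjmx M.
Proof. by apply/matrixP=> i j; rewrite !mxE rmorphN. Qed.

Lemma adjmx_sum p q (I : finType) (F : I -> 'M[C]_(p, q)) :
  adjmx (\sum_i F i) = \sum_i adjmx (F i).
Proof.
apply/matrixP=> i j; rewrite !mxE !summxE rmorph_sum.
by apply: eq_bigr => l _; rewrite !mxE.
Qed.

Lemma adjmxK p q (M : 'M[C]_(p, q)) : adjmx (adjmx M) = M.
Proof. by apply/matrixP=> i j; rewrite !mxE conjCK. Qed.

Lemma adjmxZ p q c (M : 'M[C]_(p, q)) : adjmx (c *: M) = c^* *: adjmx M.
Proof. by apply/matrixP=> i j; rewrite !mxE rmorphM. Qed.

Lemma adjmxM p q r (M : 'M[C]_(p, q)) (N : 'M[C]_(q, r)) :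
  adjmx (M *m N) = adjmx N *m adjmx M.
Proof.
apply/matrixP=> i j; rewrite !mxE rmorph_sum; apply: eq_bigr => l _.
by rewrite !mxE rmorphM mulrC.
Qed.

Lemma adjmx1 n : adjmx (1%:M : 'M[C]_n) = 1%:M.
Proof. by apply/matrixP=> i j; rewrite !mxE eq_sym rmorph_nat. Qed.

Lemma mxtrace_adj n (M : 'M[C]_n) : \tr (adjmx M) = (\tr M)^*.
Proof. by rewrite rmorph_sum; apply: eq_bigr => i _; rewrite !mxE. Qed.

Lemma mxtrace_sum n (I : finType) (F : I -> 'M[C]_n) :
  \tr (\sum_i F i) = \sum_i \tr (F i).
Proof. exact: raddf_sum. Qed.

Lemma mxtrace_mul_adj_eq0 p q (M : 'M[C]_(p, q)) :
  \tr (M *m adjmx M) = 0 -> M = 0.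
Proof.
have -> : \tr (M *m adjmx M) = \sum_a \sum_b M a b * (M a b)^*.
  by apply: eq_bigr => a _; rewrite mxE; apply: eq_bigr => b _; rewrite !mxE.
move=> norm0; apply/matrixP=> a b; rewrite mxE; apply/eqP; rewrite -mul_conjC_eq0.
have row_ge0 a' : 0 <= \sum_b' M a' b' * (M a' b')^*.
  by apply: sumr_ge0 => b' _; exact: mul_conjC_ge0.
have row0 := psumr_eq0P (fun a' _ => row_ge0 a') norm0 (i := a) isT.
by rewrite (psumr_eq0P _ row0) // => b' _; exact: mul_conjC_ge0.
Qed.

Lemma mxtrace_mulmx_delta n (X : 'M[C]_n) i j : \tr (delta_mx i j *m X) = X j i.
Proof.
rewrite mxtrace_mulC /mxtrace (bigD1 j) //= big1 ?addr0 => [|a aj]; rewrite mxE.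
  rewrite (bigD1 i) //= big1 ?addr0 => [|b bi]; rewrite mxE ?eqxx ?mulr1 //.
  by rewrite (negbTE bi) mulr0.
by rewrite big1 // => b _; rewrite mxE (negbTE aj) andbF mulr0.
Qed.

Lemma mulmx_delta_mxE n (A B : 'M[C]_n) p q t u :
  (A *m delta_mx p q *m B) t u = A t p * B q u.
Proof.
rewrite mxE (bigD1 q) //= big1 ?addr0 => [|x xq]; last first.
  by rewrite mxE big1 ?mul0r // => y _; rewrite mxE (negbTE xq) andbF mulr0.
rewrite mxE (bigD1 p) //= big1 ?addr0 => [|y yp]; last by rewrite mxE (negbTE yp) mulr0.
by rewrite mxE !eqxx mulr1.
Qed.

Lemma psd_adj n (A : 'M[C]_n) : psd A -> adjmx A = A.
Proof. by case. Qed.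

Lemma psd_congr_diag_ge0 n p (X : 'M[C]_n) (R : 'M[C]_(n, p)) l :
  psd X -> 0 <= (adjmx R *m X *m R) l l.
Proof.
case=> _ X_ge0; have := X_ge0 (col l R); congr (0 <= _); rewrite !mxE.
by apply: eq_bigr => b _; rewrite !mxE; congr (_ * _); apply: eq_bigr => a _; rewrite !mxE.
Qed.

Lemma psd_factor n (M : 'M[C]_n) : psd M -> exists R : 'M[C]_n, M = R *m adjmx R.
Proof.
move=> M_psd; have M_normal : M \is normalmx.
  by apply/normalmxP; change (M *m adjmx M = adjmx M *m M); rewrite psd_adj.
have := orthomx_spectralP M_normal; set P := spectralmx M; set d := spectral_diag M.
have P_unitary : P \is unitarymx by apply: spectral_unitarymx.
have PPadj : P *m adjmx P = 1%:M by apply/unitarymxP.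
rewrite invmx_unitary // => ME.
have d_ge0 i : 0 <= d 0 i.
  have := psd_congr_diag_ge0 (adjmx P) i M_psd; rewrite adjmxK.
  by rewrite ME !mulmxA PPadj mul1mx -mulmxA PPadj mulmx1 mxE eqxx mulr1n.
exists (adjmx P *m diag_mx (\row_i sqrtC (d 0 i))).
rewrite adjmxM adjmxK mulmxA -(mulmxA (adjmx P)) ME; congr (_ *m _ *m _).
apply/matrixP => i j; rewrite mul_diag_mx !mxE.
have [<-|ij] := eqVneq i j; last by rewrite !mulr0n rmorph0 mulr0.
by rewrite !mulr1n geC0_conj ?sqrtC_ge0 // -expr2 sqrtCK.
Qed.

Lemma mxtrace_psd_ge0 n (X P : 'M[C]_n) : psd X -> psd P -> 0 <= \tr (X *m P).
Proof.
move=> X_psd /psd_factor [R ->]; rewrite mulmxA mxtrace_mulC mulmxA.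
by apply: sumr_ge0 => l _; exact: psd_congr_diag_ge0.
Qed.

(* For [g = R R^*] the trace is the squared Frobenius norm of [R^* M R]. *)
Lemma psd_sandwich_eq0 n (g M : 'M[C]_n) :
  psd g -> \tr (g *m M *m g *m adjmx M) = 0 -> g *m M *m g = 0.
Proof.
move=> /psd_factor [R ->].
have -> : \tr (R *m adjmx R *m M *m (R *m adjmx R) *m adjmx M) =
          \tr ((adjmx R *m M *m R) *m adjmx (adjmx R *m M *m R)).
  by rewrite !adjmxM adjmxK -!mulmxA mxtrace_mulC !mulmxA.
move/mxtrace_mul_adj_eq0 => N0.
have -> : R *m adjmx R *m M *m (R *m adjmx R) = R *m (adjmx R *m M *m R) *m adjmx R.
  by rewrite !mulmxA.
by rewrite N0 mulmx0 mul0mx.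
Qed.

Lemma sandwich_eq0_submx n (g A M : 'M[C]_n) :
  adjmx g = g -> adjmx A = A -> (A^T <= g^T)%MS ->
  g *m M *m g = 0 -> A *m M *m A = 0.
Proof.
move=> g_herm A_herm /submxP [D AE] gMg0.
have {}AE : A = g *m D^T by rewrite -[A]trmxK AE trmx_mul trmxK.
have AE' : A = adjmx (D^T) *m g by rewrite -A_herm AE adjmxM g_herm.
rewrite {1}AE' AE.
have -> : adjmx D^T *m g *m M *m (g *m D^T) = adjmx D^T *m (g *m M *m g) *m D^T.
  by rewrite !mulmxA.
by rewrite gMg0 mulmx0 mul0mx.
Qed.

Lemma sandwich_eq0_eqmx n (g A M : 'M[C]_n) :
  adjmx g = g -> adjmx A = A -> (g^T == A^T)%MS ->
  g *m M *m g = 0 <-> A *m M *m A = 0.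
Proof.
by move=> g_herm A_herm /andP [gA Ag]; split; apply: sandwich_eq0_submx.
Qed.

Lemma sandwich_delta_eq0 n (f : 'M[C]_n -> C) (A B : 'M[C]_n) :
  (forall c M N, f (c *: M + N) = c * f M + f N) ->
  (forall p q, f (A *m delta_mx p q *m B) = 0) ->
  forall X, f (A *m X *m B) = 0.
Proof.
move=> f_lin f_delta X.
have f0 : f 0 = 0.
  by have := f_lin 1 0 0; rewrite scaler0 addr0 mul1r -{1}[f 0]addr0 => /addrI.
have closed c M N : f (A *m M *m B) = 0 -> f (A *m N *m B) = 0 ->
    f (A *m (c *: M + N) *m B) = 0.
  by move=> fM fN; rewrite mulmxDr mulmxDl -scalemxAr -scalemxAl f_lin fM fN mulr0 addr0.
have sum_closed (I : finType) (F : I -> 'M[C]_n) :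
    (forall i, f (A *m F i *m B) = 0) -> f (A *m (\sum_i F i) *m B) = 0.
  move=> fF; apply: (big_ind (fun M => f (A *m M *m B) = 0)) => [|M N fM fN|i _].
  - by rewrite mulmx0 mul0mx.
  - by have := closed 1 M N fM fN; rewrite scale1r.
  - exact: fF.
rewrite (matrix_sum_delta X); apply: (sum_closed) => p; apply: (sum_closed) => q.
by have := closed (X p q) _ 0 (f_delta p q); rewrite addr0 mulmx0 mul0mx; apply.
Qed.

Section OrthoProjection.
Variables (n : nat) (W : 'M[C]_n).
Hypothesis W_proj : orthoproj W.

Lemma orthoproj_idem : W *m W = W. Proof. by case: W_proj. Qed.
Lemma orthoproj_adj : adjmx W = W. Proof. by case: W_proj. Qed.

Lemma mulmx_perp_proj : perpmx W *m W = 0.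
Proof. by rewrite mulmxBl mul1mx orthoproj_idem subrr. Qed.

Lemma perpmx_adj : adjmx (perpmx W) = perpmx W.
Proof. by rewrite adjmxD adjmxN adjmx1 orthoproj_adj. Qed.

Lemma orthoproj_perpE (F : 'M[C]_n) : F = W *m F + perpmx W *m F.
Proof. by rewrite mulmxBl mul1mx addrC subrK. Qed.

Lemma orthoproj_perpEr (F : 'M[C]_n) : F = F *m W + F *m perpmx W.
Proof. by rewrite mulmxBr mulmx1 addrC subrK. Qed.

Lemma orthoproj_compress (F : 'M[C]_n) :
  perpmx W *m F = 0 -> F *m perpmx W = 0 -> F = W *m F *m W.
Proof.
move=> WpF FWp; rewrite {1}[F]orthoproj_perpE WpF addr0.
by rewrite {1}[W *m F]orthoproj_perpEr -(mulmxA W F (perpmx W)) FWp mulmx0 addr0.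
Qed.

Lemma compress_trdot_eq0 (Y : 'M[C]_n) :
  trdot Y (W *m Y *m W) = 0 -> W *m Y *m W = 0.
Proof.
move=> Y0; apply: mxtrace_mul_adj_eq0; rewrite -Y0 /trdot !adjmxM orthoproj_adj.
rewrite !mulmxA -[W *m Y *m W *m W]mulmxA orthoproj_idem mxtrace_mulC !mulmxA.
by rewrite orthoproj_idem -!mulmxA mxtrace_mulC !mulmxA.
Qed.
End OrthoProjection.

Section Blocks.
Variables k m : nat.
Implicit Types (g : 'M[C]_(k * m)) (P Q X : 'M[C]_k) (Y : 'M[C]_m).

Lemma sum_mxtens_index (V : nmodType) (F : 'I_(k * m) -> V) :
  \sum_s F s = \sum_i \sum_a F (mxtens_index (i, a)).
Proof.
rewrite pair_big /= (reindex (@mxtens_index k m)) /=; last first.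
  by exists (@mxtens_unindex k m) => x _; rewrite (mxtens_indexK, mxtens_unindexK).
by apply: eq_bigr => -[i a] _.
Qed.

Lemma blk_mul (M N : 'M[C]_(k * m)) i j :
  blk (M *m N) i j = \sum_l blk M i l *m blk N l j.
Proof.
apply/matrixP=> a b; rewrite !mxE summxE sum_mxtens_index; apply: eq_bigr => l _.
by rewrite mxE; apply: eq_bigr => c _; rewrite !mxE.
Qed.

Lemma blk_adj (M : 'M[C]_(k * m)) i j : blk (adjmx M) i j = adjmx (blk M j i).
Proof. by apply/matrixP=> a b; rewrite !mxE. Qed.

Lemma mxtrace_blk (M : 'M[C]_(k * m)) : \tr M = \sum_i \tr (blk M i i).
Proof.
rewrite /mxtrace sum_mxtens_index; apply: eq_bigr => i _.
by apply: eq_bigr => a _; rewrite mxE.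
Qed.

Definition ampl P : 'M[C]_(k * m) := P *t (1%:M : 'M[C]_m).

Lemma blk_ampl P i j : blk (ampl P) i j = P i j *: 1%:M.
Proof. by apply/matrixP=> a b; rewrite !mxE !mxtens_indexK. Qed.

Lemma amplP c P Q : ampl (c *: P + Q) = c *: ampl P + ampl Q.
Proof. by apply/matrixP=> s t; rewrite !mxE mulrDl mulrA. Qed.

Lemma ampl_adj P : adjmx (ampl P) = ampl (adjmx P).
Proof.
apply/matrixP=> s t; rewrite !mxE; case: (mxtens_unindex s) => i a.
by case: (mxtens_unindex t) => j b /=; rewrite rmorphM rmorph_nat eq_sym.
Qed.

Lemma GmapE g X : Gmap g X = \sum_i \sum_j X j i *: blk g i j.
Proof.
by apply: eq_bigr => i _; apply: eq_bigr => j _; rewrite mxtrace_mulmx_delta.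
Qed.

Lemma FmapE g Y a b : Fmap g Y a b = \tr (blk g a b *m Y).
Proof.
rewrite /Fmap summxE (bigD1 a) //= [X in _ + X]big1 ?addr0 => [|i ia]; last first.
  by rewrite summxE big1 // => j _; rewrite !mxE eq_sym (negbTE ia) mulr0.
rewrite summxE (bigD1 b) //= [X in _ + X]big1 ?addr0 => [|j jb].
  by rewrite !mxE !eqxx mulr1.
by rewrite !mxE eq_sym (negbTE jb) andbF mulr0.
Qed.

Lemma GmapP g c X X' : Gmap g (c *: X + X') = c *: Gmap g X + Gmap g X'.
Proof.
rewrite !GmapE scaler_sumr -big_split; apply: eq_bigr => i _.
rewrite scaler_sumr -big_split; apply: eq_bigr => j _.
by rewrite !mxE scalerDl scalerA.
Qed.

Lemma GmapD g X X' : Gmap g (X + X') = Gmap g X + Gmap g X'.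
Proof. by rewrite -[X]scale1r GmapP !scale1r. Qed.

Lemma Fmap0 g : Fmap g 0 = 0.
Proof. by apply/matrixP=> a b; rewrite FmapE mulmx0 mxtrace0 mxE. Qed.

Lemma mxtrace_Fmap_mul g X Y : \tr (Fmap g Y *m X) = \tr (Y *m Gmap g X).
Proof.
have -> : \tr (Fmap g Y *m X) = \sum_a \sum_b \tr (blk g a b *m Y) * X b a.
  by apply: eq_bigr => a _; rewrite mxE; apply: eq_bigr => b _; rewrite FmapE.
rewrite GmapE mulmx_sumr mxtrace_sum; apply: eq_bigr => a _.
rewrite mulmx_sumr mxtrace_sum; apply: eq_bigr => b _.
by rewrite -scalemxAr mxtraceZ mxtrace_mulC mulrC.
Qed.

Lemma mxtrace_GmapM g X X' : \tr (Gmap g X *m Gmap g X') =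
  \sum_s \sum_t \sum_u \sum_v (X t s * X' v u) * \tr (blk g s t *m blk g u v).
Proof.
rewrite !GmapE mulmx_suml mxtrace_sum; apply: eq_bigr => s _.
rewrite mulmx_suml mxtrace_sum; apply: eq_bigr => t _.
rewrite mulmx_sumr mxtrace_sum; apply: eq_bigr => u _.
rewrite mulmx_sumr mxtrace_sum; apply: eq_bigr => v _.
by rewrite -scalemxAl -scalemxAr !mxtraceZ mulrA.
Qed.

Lemma mxtrace_ampl_sandwich g P Q : \tr (g *m ampl P *m g *m ampl Q) =
  \sum_s \sum_t \sum_u \sum_v (P t u * Q v s) * \tr (blk g s t *m blk g u v).
Proof.
have blk_gPg s v : blk (g *m ampl P *m g) s v =
    \sum_u \sum_t P t u *: (blk g s t *m blk g u v).
  rewrite blk_mul; apply: eq_bigr => u _; rewrite blk_mul mulmx_suml.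
  by apply: eq_bigr => t _; rewrite blk_ampl -scalemxAr mulmx1 -scalemxAl.
rewrite mxtrace_blk; apply: eq_bigr => s _.
transitivity (\sum_v \sum_u \sum_t (P t u * Q v s) * \tr (blk g s t *m blk g u v)).
  rewrite blk_mul mxtrace_sum; apply: eq_bigr => v _.
  rewrite blk_ampl -scalemxAr mulmx1 mxtraceZ blk_gPg mxtrace_sum mulr_sumr.
  apply: eq_bigr => u _; rewrite mxtrace_sum mulr_sumr; apply: eq_bigr => t _.
  by rewrite mxtraceZ mulrCA mulrA.
rewrite exchange_big /=; under eq_bigr do rewrite exchange_big /=.
by rewrite exchange_big.
Qed.

(* Both sides expand to the same sum of [A_tp E_ls D_vr B_qu tr (g_st g_uv)]. *)
Lemma realign_delta g (A B D E : 'M[C]_k) p q r l :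
  \tr (g *m ampl (A *m delta_mx p q *m B) *m g *m ampl (D *m delta_mx r l *m E)) =
  \tr (Gmap g (A *m delta_mx p l *m E) *m Gmap g (D *m delta_mx r q *m B)).
Proof.
rewrite mxtrace_ampl_sandwich mxtrace_GmapM; apply: eq_bigr => s _.
apply: eq_bigr => t _; apply: eq_bigr => u _; apply: eq_bigr => v _.
by rewrite !mulmx_delta_mxE; congr (_ * _); ring.
Qed.

Lemma realignment_eq0 g (A B D E : 'M[C]_k) :
  (forall X X', \tr (Gmap g (A *m X *m B) *m Gmap g (D *m X' *m E)) = 0) <->
  (forall P Q, \tr (g *m ampl (A *m P *m E) *m g *m ampl (D *m Q *m B)) = 0).
Proof.
split=> H0 X X'.
- apply: (sandwich_delta_eq0
    (f := fun P => \tr (g *m ampl P *m g *m ampl (D *m X' *m B)))) => [c P P'|p q].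
    by rewrite amplP mulmxDr !mulmxDl -scalemxAr -!scalemxAl mxtraceD mxtraceZ.
  apply: (sandwich_delta_eq0
    (f := fun Q => \tr (g *m ampl (A *m delta_mx p q *m E) *m g *m ampl Q)))
    => [c Q Q'|r l].
    by rewrite amplP mulmxDr -scalemxAr mxtraceD mxtraceZ.
  by rewrite realign_delta H0.
- apply: (sandwich_delta_eq0
    (f := fun Z => \tr (Gmap g Z *m Gmap g (D *m X' *m E)))) => [c Z Z'|p q].
    by rewrite GmapP mulmxDl -scalemxAl mxtraceD mxtraceZ.
  apply: (sandwich_delta_eq0
    (f := fun Z => \tr (Gmap g (A *m delta_mx p q *m B) *m Gmap g Z)))
    => [c Z Z'|r l].
    by rewrite GmapP mulmxDr -scalemxAr mxtraceD mxtraceZ.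
  by rewrite -realign_delta H0.
Qed.

Section Hermitian.
Variable g : 'M[C]_(k * m).
Hypothesis g_herm : adjmx g = g.

Lemma blk_herm i j : adjmx (blk g i j) = blk g j i.
Proof. by rewrite -blk_adj g_herm. Qed.

Lemma Gmap_adj X : Gmap g (adjmx X) = adjmx (Gmap g X).
Proof.
rewrite !GmapE adjmx_sum exchange_big; apply: eq_bigr => a _; rewrite adjmx_sum.
by apply: eq_bigr => b _; rewrite adjmxZ blk_herm adjmxE.
Qed.

Lemma Fmap_adj Y : Fmap g (adjmx Y) = adjmx (Fmap g Y).
Proof.
apply/matrixP => a b; rewrite adjmxE !FmapE -mxtrace_adj adjmxM blk_herm.
by rewrite mxtrace_mulC.
Qed.

Lemma FG_adj X : FG g (adjmx X) = adjmx (FG g X).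
Proof. by rewrite /FG Gmap_adj Fmap_adj. Qed.
End Hermitian.

Definition sandwich_vanishes g (U V : 'M[C]_k) :=
  forall P, g *m ampl (U *m P *m V) *m g = 0.

Lemma sandwich_vanishes_eqmx g g' U V :
  psd g -> psd g' -> (g^T == g'^T)%MS ->
  sandwich_vanishes g U V <-> sandwich_vanishes g' U V.
Proof.
move=> /psd_adj g_herm /psd_adj g'_herm gg'.
by split=> H P; apply/(sandwich_eq0_eqmx _ g_herm g'_herm gg').
Qed.

(* [adjmx U *m B = adjmx U] makes the adjoint of [ampl (U *m P *m E)] an
   admissible second factor, so that [psd_sandwich_eq0] applies. *)
Lemma trace_Gmap_eq0_sandwich g (U B E : 'M[C]_k) :
  psd g -> adjmx U *m B = adjmx U ->
  (forall X X', \tr (Gmap g (U *m X *m B) *m Gmap g (X' *m E)) = 0) <->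
  sandwich_vanishes g U E.
Proof.
move=> g_psd UB; have realign := @realignment_eq0 g U B 1%:M E.
have -> : (forall X X', \tr (Gmap g (U *m X *m B) *m Gmap g (X' *m E)) = 0) <->
    (forall X X', \tr (Gmap g (U *m X *m B) *m Gmap g (1%:M *m X' *m E)) = 0).
  by split=> H X X'; [rewrite mul1mx | rewrite -[X']mul1mx]; exact: H.
rewrite realign; split=> H P.
- apply: psd_sandwich_eq0 => //; rewrite ampl_adj !adjmxM -UB !mulmxA.
  by rewrite -[adjmx E *m adjmx P *m adjmx U]mul1mx; exact: H.
- by move=> Q; rewrite H mul0mx mxtrace0.
Qed.

Lemma mx_invariant_FG_trace g W : adjmx g = g -> orthoproj W ->
  mx_invariant (FG g) W <->
  (forall X X', \tr (Gmap g (W *m X *m W) *m Gmap g (X' *m perpmx W)) = 0).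
Proof.
move=> g_herm W_proj.
have traceE X X' : \tr (Gmap g (W *m X *m W) *m Gmap g (X' *m perpmx W)) =
    \tr (perpmx W *m FG g (W *m X *m W) *m X').
  by rewrite -mxtrace_Fmap_mul mulmxA mxtrace_mulC mulmxA.
split=> [W_inv X X'|H0 _ [X ->]].
  rewrite traceE; have [Y ->] := W_inv _ (ex_intro _ X erefl).
  by rewrite !mulmxA mulmx_perp_proj // !mul0mx mxtrace0.
have perpFG0 X0 : perpmx W *m FG g (W *m X0 *m W) = 0.
  by apply: mxtrace_mul_adj_eq0; rewrite -traceE H0.
exists (FG g (W *m X *m W)); apply: orthoproj_compress => //.
have := congr1 (@adjmx C _ _) (perpFG0 (adjmx X)).
rewrite adjmx0 adjmxM perpmx_adj // -FG_adj // !adjmxM adjmxK orthoproj_adj //.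
by rewrite mulmxA.
Qed.

Lemma FG_perp_eq0_trace g V : adjmx g = g -> orthoproj V ->
  (forall X X', FG g (perpmx V *m X + X' *m perpmx V) = 0) <->
  (forall X X', \tr (Gmap g (perpmx V *m X) *m Gmap g (X' *m perpmx V)) = 0).
Proof.
move=> g_herm V_proj; split=> [FG0 X X'|H0 X X'].
  have := FG0 X 0; rewrite mul0mx addr0 /FG => FG0X.
  by rewrite -mxtrace_Fmap_mul FG0X mul0mx mxtrace0.
have G0 Z : Gmap g (Z *m perpmx V) = 0.
  apply: mxtrace_mul_adj_eq0.
  by rewrite -Gmap_adj // adjmxM perpmx_adj // mxtrace_mulC H0.
have G0' Z : Gmap g (perpmx V *m Z) = 0.
  have := congr1 (@adjmx C _ _) (G0 (adjmx Z)).
  by rewrite -Gmap_adj // adjmxM perpmx_adj // adjmxK adjmx0.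
by rewrite /FG GmapD G0 G0' addr0 Fmap0.
Qed.

Lemma mx_invariant_FG_sandwich g W : psd g -> orthoproj W ->
  mx_invariant (FG g) W <-> sandwich_vanishes g W (perpmx W).
Proof.
move=> g_psd W_proj; rewrite mx_invariant_FG_trace ?psd_adj //.
by apply: trace_Gmap_eq0_sandwich => //; rewrite orthoproj_adj ?orthoproj_idem.
Qed.

Lemma FG_perp_eq0_sandwich g V : psd g -> orthoproj V ->
  (forall X X', FG g (perpmx V *m X + X' *m perpmx V) = 0) <->
  sandwich_vanishes g (perpmx V) (perpmx V).
Proof.
move=> g_psd V_proj; rewrite FG_perp_eq0_trace ?psd_adj //.
rewrite -(@trace_Gmap_eq0_sandwich _ _ 1%:M) ?mulmx1 //.
by split=> H X X'; [rewrite mulmx1 | rewrite -[perpmx V *m X]mulmx1]; exact: H.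
Qed.

Definition tensv (w : 'cV[C]_k) (v : 'cV[C]_m) : 'cV[C]_(k * m) :=
  \col_s (w (mxtens_unindex s).1 0 * v (mxtens_unindex s).2 0).

Lemma quad_tensv g w v : (adjmx (tensv w v) *m g *m tensv w v) 0 0 =
  \sum_i \sum_j ((w i 0)^* * w j 0) * (adjmx v *m blk g i j *m v) 0 0.
Proof.
pose F i j a b := (w i 0)^* * (v a 0)^* *
  g (mxtens_index (i, a)) (mxtens_index (j, b)) * (w j 0 * v b 0).
transitivity (\sum_j \sum_b \sum_i \sum_a F i j a b).
  rewrite mxE sum_mxtens_index; apply: eq_bigr => j _; apply: eq_bigr => b _.
  rewrite mxE sum_mxtens_index mulr_suml; apply: eq_bigr => i _.
  rewrite mulr_suml; apply: eq_bigr => a _.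
  by rewrite !mxE !mxtens_indexK /F rmorphM.
under eq_bigr => j _ do rewrite exchange_big /=.
rewrite exchange_big /=; apply: eq_bigr => i _; apply: eq_bigr => j _.
rewrite mxE mulr_sumr; apply: eq_bigr => b _.
rewrite mxE mulr_suml mulr_sumr; apply: eq_bigr => a _.
by rewrite !mxE /F; ring.
Qed.

Lemma quad_sum n (w : 'cV[C]_n) (N : 'M[C]_n) :
  (adjmx w *m N *m w) 0 0 = \sum_i \sum_j ((w i 0)^* * w j 0) * N i j.
Proof.
rewrite mxE exchange_big /=; apply: eq_bigr => i _; rewrite mxE mulr_suml.
by apply: eq_bigr => j _; rewrite !mxE; ring.
Qed.

Lemma Gmap_psd g X : psd g -> psd X -> psd (Gmap g X).
Proof.
move=> g_psd X_psd; have g_herm := psd_adj g_psd; split.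
  by rewrite -Gmap_adj // psd_adj.
move=> v; pose c := \matrix_(i, j) (adjmx v *m blk g i j *m v) 0 0 : 'M[C]_k.
have cE i j : c i j = (adjmx v *m blk g i j *m v) 0 0 by rewrite mxE.
have c_psd : psd c.
  split.
    apply/matrixP => i j; rewrite adjmxE !cE -(adjmxE (adjmx v *m blk g j i *m v)).
    by rewrite !adjmxM adjmxK blk_herm // mulmxA.
  move=> w; rewrite quad_sum; under eq_bigr do under eq_bigr do rewrite cE.
  by rewrite -quad_tensv; case: g_psd.
have -> : (adjmx v *m Gmap g X *m v) 0 0 = \tr (X *m c).
  rewrite /mxtrace; under [RHS]eq_bigr do rewrite mxE.
  rewrite [RHS]exchange_big GmapE mulmx_sumr mulmx_suml summxE.
  apply: eq_bigr => i _; rewrite mulmx_sumr mulmx_suml summxE.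
  by apply: eq_bigr => j _; rewrite -scalemxAr -scalemxAl mxE cE.
exact: mxtrace_psd_ge0.
Qed.

Lemma Fmap_psd g Y : psd g -> psd Y -> psd (Fmap g Y).
Proof.
move=> g_psd Y_psd; have g_herm := psd_adj g_psd; split.
  by rewrite -Fmap_adj // psd_adj.
move=> v; pose P := \sum_a \sum_b ((v a 0)^* * v b 0) *: blk g a b.
have P_psd : psd P.
  split.
    rewrite /P adjmx_sum exchange_big /=; apply: eq_bigr => a _; rewrite adjmx_sum.
    by apply: eq_bigr => b _; rewrite adjmxZ blk_herm // rmorphM /= conjCK mulrC.
  move=> w; have -> : (adjmx w *m P *m w) 0 0 = (adjmx (tensv v w) *m g *m tensv v w) 0 0.
    rewrite quad_tensv /P mulmx_sumr mulmx_suml summxE; apply: eq_bigr => a _.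
    rewrite mulmx_sumr mulmx_suml summxE; apply: eq_bigr => b _.
    by rewrite -scalemxAr -scalemxAl mxE.
  by case: g_psd.
have -> : (adjmx v *m Fmap g Y *m v) 0 0 = \tr (P *m Y).
  rewrite quad_sum /P mulmx_suml mxtrace_sum; apply: eq_bigr => a _.
  rewrite mulmx_suml mxtrace_sum; apply: eq_bigr => b _.
  by rewrite FmapE -scalemxAl mxtraceZ.
exact: mxtrace_psd_ge0.
Qed.

Lemma FG_positive g : psd g -> positive_map (FG g).
Proof. by move=> g_psd X X_psd; apply: Fmap_psd => //; exact: Gmap_psd. Qed.

Lemma FG_selfadjoint g : adjmx g = g -> selfadjoint_map (FG g).
Proof.
move=> g_herm X Y; rewrite /trdot -FG_adj // /FG mxtrace_Fmap_mul.
by rewrite [RHS]mxtrace_mulC mxtrace_Fmap_mul mxtrace_mulC.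
Qed.

Lemma CR_single_block g V : psd g -> orthoproj V ->
  mx_invariant (FG g) V -> irreducible_on (FG g) V ->
  (forall X X', FG g (perpmx V *m X + X' *m perpmx V) = 0) -> CR g.
Proof.
move=> g_psd V_proj V_inv V_irr FG_perp0; split=> //.
split; first exact/FG_selfadjoint/psd_adj.
split; first exact: FG_positive.
exists 1%N, (fun=> V); split=> // [i j|Y Y_perp].
  by rewrite !ord1 eqxx.
have VYV0 := compress_trdot_eq0 V_proj (Y_perp ord0 Y).
have -> : Y = perpmx V *m Y + (V *m Y) *m perpmx V.
  by rewrite /perpmx mulmxBr mulmx1 VYV0 subr0 mulmxBl mul1mx subrK.
exact: FG_perp0.
Qed.

Section SameImage.
Variables g g' : 'M[C]_(k * m).
Hypotheses (g_psd : psd g) (g'_psd : psd g') (gg' : (g^T == g'^T)%MS).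

Lemma mx_invariant_FG_eqmx W : orthoproj W ->
  mx_invariant (FG g) W <-> mx_invariant (FG g') W.
Proof.
move=> W_proj; rewrite !mx_invariant_FG_sandwich //.
exact: sandwich_vanishes_eqmx.
Qed.

Lemma irreducible_on_FG_eqmx V :
  irreducible_on (FG g) V -> irreducible_on (FG g') V.
Proof.
move=> V_irr W W_proj W_sub W_inv; apply: V_irr => //.
exact/(mx_invariant_FG_eqmx W_proj).
Qed.

Lemma FG_perp_eq0_eqmx V : orthoproj V ->
  (forall X X', FG g (perpmx V *m X + X' *m perpmx V) = 0) ->
  (forall X X', FG g' (perpmx V *m X + X' *m perpmx V) = 0).
Proof.
move=> V_proj; rewrite !FG_perp_eq0_sandwich //.
by move/(sandwich_vanishes_eqmx _ _ g_psd g'_psd gg').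
Qed.
End SameImage.

End Blocks.

End ComplexMatrices.

Unset Implicit Arguments.
Set Strict Implicit.
Theorem mainTheorem9 (C : numClosedFieldType) (k m : nat)
  (gamma A : 'M[C]_(k * m)) (V1 : 'M[C]_k) :
  psd gamma -> psd A ->
  (* Im(gamma) = Im(A): equal column spaces *)
  (gamma^T == A^T)%MS ->
  orthoproj V1 ->
  mx_invariant (FG gamma) V1 ->
  irreducible_on (FG gamma) V1 ->
  (forall X Y : 'M[C]_k,
      FG gamma (perpmx V1 *m X + Y *m perpmx V1) = 0) ->
  [/\ mx_invariant (FG A) V1,
      irreducible_on (FG A) V1,
      (forall X Y : 'M[C]_k, FG A (perpmx V1 *m X + Y *m perpmx V1) = 0),
      CR gamma & CR A].
Proof.
move=> gamma_psd A_psd same_image V1_proj V1_inv V1_irr FG_perp0.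
have A_inv : mx_invariant (FG A) V1.
  by rewrite -(mx_invariant_FG_eqmx gamma_psd A_psd same_image V1_proj).
have A_irr := irreducible_on_FG_eqmx gamma_psd A_psd same_image V1_irr.
have A_perp0 := FG_perp_eq0_eqmx gamma_psd A_psd same_image V1_proj FG_perp0.
split=> //.
- exact: (CR_single_block gamma_psd V1_proj).
- exact: (CR_single_block A_psd V1_proj).
Qed.
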